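(* Let $n\in\mathbb N$, let $K_1,\dots,K_n$ be singular kernel functions and let $J$ be an arbitrary $n$-field function. Let $\mathbf y\in\overline S$ with $0<y_1\le\dots\le y_n<1$, and let $j\in\{0,\dots,n\}$ satisfy $m_j(\mathbf y)\ne-\infty$. Then $m_j$ is Lipschitz continuous on $\{\mathbf x\in\overline S:\|\mathbf x-\mathbf y\|<\varepsilon\}$ for some $\varepsilon>0$. In particular, the vector function $\mathbf m=(m_0,\dots,m_n)$ is locally Lipschitz continuous on the regularity set $Y$.
   Context: A kernel function is a function $K:(-1,0)\cup(0,1)\to\mathbb R$ that is concave on $(-1,0)$ and concave on $(0,1)$ and satisfies $\lim_{t\downarrow0}K(t)=\lim_{t\uparrow0}K(t)$. It is extended to $[-1,1]$ with values in $[-\infty,\infty)$ by its one-sided limits at $-1,0,1$. A kernel function is singular if $K(0)=-\infty$. An $n$-field function is a function $J:[0,1]\to[-\infty,\infty)$ that is bounded above and whose set of finite values has total weight strictly greater than $n$. Here the points $0$ and $1$ each have weight $1/2$ and every point of $(0,1)$ has weight $1$. $S=\{\mathbf y\in\mathbb R^n:0<y_1<\dots<y_n<1\}$ and $\overline S$ is its closure. $F(\mathbf y,t)=J(t)+\sum_{i=1}^nK_i(t-y_i)$, with the convention $a+(-\infty)=-\infty$. Set $y_0:=0$ and $y_{n+1}:=1$. Let $I_j(\mathbf y)=[y_j,y_{j+1}]$ and $m_j(\mathbf y)=\sup_{t\in I_j(\mathbf y)}F(\mathbf y,t)$. $Y=\{\mathbf y\in S:m_j(\mathbf y)\neq-\infty\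 \forall j\}$. $\|\mathbf v\|=\max_i|v_i|$. *)

From HB Require Import structures.
From mathcomp Require Import all_boot all_order all_algebra.
From mathcomp Require Import all_classical all_reals all_analysis.
Set Implicit Arguments. Unset Strict Implicit. Unset Printing Implicit Defensive.
Import Order.TTheory GRing.Theory Num.Theory.
Import numFieldNormedType.Exports.
Local Open Scope classical_set_scope.
Local Open Scope ring_scope.

Section Defs.
Variable R : realType.

Definition concave_on (f : R -> R) (a b : R) : Prop :=
  forall x y l : R, a < x < b -> a < y < b -> 0 <= l <= 1 ->
    l * f x + (1 - l) * f y <= f (l * x + (1 - l) * y).

(* A kernel function, already extended to [-1,1] by its one-sided limits.
   Values outside [-1,1] are irrelevant. *)
Definition kernel_function (K : R -> \bar R) : Prop :=
  [/\ (forall t, (-1 < t < 0) || (0 < t < 1) -> K t \is a fin_num),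
      concave_on (fun t => fine (K t)) (-1) 0,
      concave_on (fun t => fine (K t)) 0 1,
      (K x @[x --> 0^'-] --> K 0) /\ (K x @[x --> 0^'+] --> K 0) &
      (K x @[x --> (-1)^'+] --> K (-1)) /\ (K x @[x --> 1^'-] --> K 1)].

Definition singular_kernel (K : R -> \bar R) : Prop :=
  kernel_function K /\ K 0 = -oo%E.

Definition wt (t : R) : R := if (t == 0) || (t == 1) then 2^-1 else 1.

Definition weight (A : set R) : \bar R := \esum_(t in A) (wt t)%:E.

Definition field_function (n : nat) (J : R -> \bar R) : Prop :=
  (exists M : R, forall t, 0 <= t <= 1 -> (J t <= M%:E)%E) /\
  (n%:R%:E < weight [set t | (0 <= t <= 1)%R /\ J t \is a fin_num])%E.

(* y_0 := 0, y_(k+1) := y k for k < n, y_(n+1) := 1 *)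
Definition yext (n : nat) (y : 'I_n -> R) (k : nat) : R :=
  if k is k'.+1 then (if insub k' is Some i then y i else 1) else 0.

Definition inS (n : nat) (y : 'I_n -> R) : Prop :=
  forall k, (k <= n)%N -> yext y k < yext y k.+1.

Definition inSbar (n : nat) (y : 'I_n -> R) : Prop :=
  forall k, (k <= n)%N -> yext y k <= yext y k.+1.

Definition maxnorm (n : nat) (v : 'I_n -> R) : R := \big[Num.max/0]_(i < n) `|v i|.

Definition Fval (n : nat) (J : R -> \bar R) (K : 'I_n -> R -> \bar R)
  (y : 'I_n -> R) (t : R) : \bar R :=
  (J t + \sum_(i < n) K i (t - y i)%R)%E.

Definition mval (n : nat) (J : R -> \bar R) (K : 'I_n -> R -> \bar R)
  (j : 'I_n.+1) (y : 'I_n -> R) : \bar R :=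
  ereal_sup [set Fval J K y t | t in `[yext y j, yext y j.+1]].

Definition inY (n : nat) (J : R -> \bar R) (K : 'I_n -> R -> \bar R)
  (y : 'I_n -> R) : Prop :=
  inS y /\ forall j : 'I_n.+1, mval J K j y != -oo%E.

End Defs.

From HB Require Import structures.
From mathcomp Require Import all_boot all_order all_algebra.
From mathcomp Require Import all_classical all_reals all_analysis.
From mathcomp Require Import ring lra.
Import Order.TTheory GRing.Theory Num.Theory.
Import numFieldNormedType.Exports.
Local Open Scope classical_set_scope.
Local Open Scope ring_scope.
Set Implicit Arguments. Unset Strict Implicit.

(* Fix y and j with m_j(y) > -oo and a point t0 of I_j(y) where F(y,t0) = V is
   finite.  Because every kernel tends to -oo at 0 and all terms of F are
   bounded above near y, F(x,t) <= V - 1 whenever t is r-close to some x_i,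
   for some r > 0 and all x near y; in particular t0 is r-far from every y_i.
   For x near y the supremum m_j(x) is therefore realized on points t that
   are r/2-far from all y_i, and such a t lies in I_j(x) iff it lies in I_j(y).
   There each kernel is evaluated on a compact subinterval of (-1,0) or (0,1),
   where it is Lipschitz by concavity, so F(., t) is Lipschitz uniformly in t,
   and so is its supremum m_j. *)

Section Concave.
Variable R : realType.
Implicit Types (f : R -> R) (lo hi : R).

Lemma concave_chord f lo hi p q r : concave_on f lo hi ->
  lo < p -> p < q -> q < r -> r < hi ->
  (f r - f q) * (q - p) <= (f q - f p) * (r - q).
Proof.
move=> cf lp pq qr rh.
have rp : 0 < r - p by lra.
pose l := (r - q) / (r - p).
have l01 : 0 <= l <= 1.
  by rewrite divr_ge0 ?ler_pdivrMr ?mul1r /=; lra.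
have lpr : l * p + (1 - l) * r = q by rewrite /l; field; lra.
have lr : (r - p) * l = r - q by rewrite /l mulrC divfK //; lra.
have lr' : (r - p) * (1 - l) = q - p by rewrite mulrBr lr; lra.
clearbody l.
have hp : lo < p < hi by apply/andP; lra.
have hr : lo < r < hi by apply/andP; lra.
have := cf p r l hp hr l01; rewrite lpr => /(ler_wpM2l (ltW rp)).
by rewrite mulrDr !mulrA lr lr'; lra.
Qed.

Lemma concave_on_reflect f lo hi :
  concave_on f lo hi -> concave_on (fun x => f (- x)) (- hi) (- lo).
Proof.
move=> cf x y l hx hy hl.
have -> : - (l * x + (1 - l) * y) = l * - x + (1 - l) * - y by ring.
by apply: cf => //; apply/andP; lra.
Qed.

Lemma concave_bounded_above f lo hi a b : concave_on f lo hi ->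
  lo < a -> b < hi -> exists C, forall s, a <= s <= b -> f s <= C.
Proof.
move=> cf la bh; pose p := (lo + a) / 2.
have ap : 0 < a - p by rewrite /p; lra.
exists (f a + `|f a - f p| * `|b - a| / (a - p)) => s /andP[sa sb].
have ge0 : 0 <= `|f a - f p| * `|b - a| / (a - p) by rewrite divr_ge0 ?mulr_ge0 // ltW.
case: (leP s a) => [le_sa|lt_as].
  by rewrite (_ : s = a); lra.
have lp : lo < p by rewrite /p; lra.
have pa : p < a by rewrite /p; lra.
have := concave_chord cf lp pa lt_as (le_lt_trans sb bh).
rewrite -ler_pdivlMr // => slope.
suff : (f a - f p) * (s - a) / (a - p) <= `|f a - f p| * `|b - a| / (a - p) by lra.
rewrite ler_pM2r ?invr_gt0 //.
apply: le_trans (ler_norm _) _; rewrite normrM ler_wpM2l //.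
by rewrite !ger0_norm; lra.
Qed.

Lemma concave_increment_le f lo hi p a b C : concave_on f lo hi ->
  lo < p -> p < a -> b < hi -> (forall s, a <= s <= b -> f s <= C) ->
  forall s s', a <= s -> s <= s' -> s' <= b ->
  f s' - f s <= `|C - f p| / (a - p) * (s' - s).
Proof.
move=> cf lp pa bh fC s s' a_s ss' s'b.
have ap : 0 < a - p by lra.
set L := `|C - f p| / (a - p).
have L0 : 0 <= L by rewrite divr_ge0 // ltW.
have [<-|lt_ss'] := eqVneq s s'; first by rewrite !subrr mulr0.
have {}lt_ss' : s < s' by rewrite lt_neqAle lt_ss'.
have slope : f s - f p <= L * (s - p).
  have [|fsp] := lerP (f s - f p) 0; first by have := mulr_ge0 L0 (_ : 0 <= s - p); lra.
  have fs : f s <= C by apply: fC; rewrite a_s (le_trans ss' s'b).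
  have : `|C - f p| = L * (a - p) by rewrite /L divfK //; lra.
  have aps : a - p <= s - p by lra.
  by have := ler_norm (C - f p); have := ler_wpM2l L0 aps; lra.
have chord := concave_chord cf lp (lt_le_trans pa a_s) lt_ss' (le_lt_trans s'b bh).
have step : (f s - f p) * (s' - s) <= L * (s' - s) * (s - p).
  by rewrite mulrAC ler_wpM2r //; lra.
by rewrite -(ler_pM2r (_ : 0 < s - p)); lra.
Qed.

Lemma concave_lipschitz f lo hi a b : concave_on f lo hi -> lo < a -> b < hi ->
  exists2 L, 0 <= L & forall s s', a <= s <= b -> a <= s' <= b ->
    `|f s - f s'| <= L * `|s - s'|.
Proof.
move=> cf la bh; have [C fC] := concave_bounded_above cf la bh.
pose p := (lo + a) / 2; pose q := (b + hi) / 2.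
set L1 := `|C - f p| / (a - p); set L2 := `|C - f q| / (q - b).
have L10 : 0 <= L1 by rewrite divr_ge0 //; rewrite /p; lra.
have L20 : 0 <= L2 by rewrite divr_ge0 //; rewrite /q; lra.
have up s s' : a <= s -> s <= s' -> s' <= b -> f s' - f s <= L1 * (s' - s).
  by apply: (concave_increment_le cf) => //; rewrite /p; lra.
have down s s' : a <= s -> s <= s' -> s' <= b -> f s - f s' <= L2 * (s' - s).
  move=> a_s ss' s'b.
  have := concave_increment_le (concave_on_reflect cf) (p := - q) (a := - b) (b := - a) (C := C).
  rewrite !opprK (addrC (- b)).
  move=> /(_ _ _ _ _ (- s') (- s)); rewrite !opprK (addrC (- s)).
  apply; rewrite /q; [lra|lra|lra| |lra|lra|lra].
  by move=> t ht; apply: fC; lra.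
exists (L1 + L2); first exact: addr_ge0.
suff le_ss' s s' : a <= s <= b -> a <= s' <= b -> s <= s' ->
    `|f s - f s'| <= (L1 + L2) * `|s - s'|.
  move=> s s' hs hs'; have [/ltW|/ltW|->] := ltgtP s s'; first exact: le_ss'.
    by rewrite distrC (distrC s); exact: le_ss'.
  by rewrite !subrr normr0 mulr0.
move=> /andP[a_s sb] /andP[a_s' s'b] ss'.
rewrite (distrC s) (ger0_norm (_ : 0 <= s' - s)); last lra.
have := up s s' a_s ss' s'b; have := down s s' a_s ss' s'b.
have ss'0 : 0 <= s' - s by lra.
have := mulr_ge0 L10 ss'0; have := mulr_ge0 L20 ss'0.
by rewrite ler_norml mulrDl => ? ? ? ?; apply/andP; split; lra.
Qed.
End Concave.

Lemma near_punctured0 (R : realType) (P : R -> Prop) :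
  (\forall x \near 0^'+, P x) -> (\forall x \near 0^'-, P x) ->
  exists2 r : R, 0 < r & forall x, x != 0 -> `|x| < r -> P x.
Proof.
move=> /nbhs_ballP[e1 e10 P1] /nbhs_ballP[e2 e20 P2].
exists (Num.min e1 e2); first by rewrite lt_min e10.
move=> x x0; rewrite lt_min => /andP[x1 x2].
have [xn|xp|x_eq0] := ltgtP x 0; last by rewrite x_eq0 eqxx in x0.
- by apply: P2 => //; rewrite /ball /= sub0r normrN.
- by apply: P1 => //; rewrite /ball /= sub0r normrN.
Qed.

Section SingularKernel.
Variables (R : realType) (K : R -> \bar R).
Hypothesis hK : singular_kernel K.

Lemma singular_kernel_fineK s : 0 < `|s| < 1 -> K s = (fine (K s))%:E.
Proof.
move=> hs; rewrite fineK //; case: hK => -[finK _ _ _ _] _; apply: finK.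
have [sn|sp|s0] := ltgtP s 0.
- by rewrite (ltr0_norm sn) in hs; rewrite andbT; lra.
- by rewrite (gtr0_norm sp) in hs; case/andP: hs => _ ->; rewrite orbT.
- by rewrite s0 normr0 ltxx in hs.
Qed.

Lemma singular_kernel_near0 B :
  exists r, 0 < r /\ forall s, `|s| < r -> (K s <= B%:E)%E.
Proof.
case: hK => -[_ _ _ [K0l K0r] _] K0; rewrite K0 in K0l K0r.
have [r r0 Kr] := near_punctured0 (cvgeNy_le K0r B) (cvgeNy_le K0l B).
exists r; split => // s sr; have [->|s0] := eqVneq s 0; first by rewrite K0 leNye.
exact: Kr.
Qed.

Lemma singular_kernel_ub d : d < 1 ->
  exists C, 0 <= C /\ forall s, `|s| <= d -> (K s <= C%:E)%E.
Proof.
move=> d1; have [r [r0 Kr]] := singular_kernel_near0 0.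
case: hK => -[_ cneg cpos _ _] _.
have [C1 C1ub] := concave_bounded_above cpos r0 d1.
have d1' : -1 < - d by lra.
have r0' : - r < 0 by lra.
have [C2 C2ub] := concave_bounded_above cneg d1' r0'.
have := ler_norm C1; have := ler_norm C2; have := normr_ge0 C1; have := normr_ge0 C2.
exists (`|C1| + `|C2|); split => [|s sd]; first exact: addr_ge0.
have [sr|rs] := ltrP `|s| r; first by apply: le_trans (Kr s sr) _; rewrite lee_fin addr_ge0.
have s01 : 0 < `|s| < 1 by apply/andP; split; lra.
rewrite (singular_kernel_fineK s01) lee_fin.
have [s0|s0] := lerP 0 s.
- rewrite ger0_norm // in rs sd; have := C1ub s; rewrite rs sd => /(_ isT); lra.
- rewrite ltr0_norm // in rs sd; have := C2ub s; rewrite -lerNl -lerNr rs sd.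
  by move=> /(_ isT); lra.
Qed.

Lemma singular_kernel_lipschitz a d : 0 < a -> d < 1 ->
  exists L, 0 <= L /\ forall s s', a <= `|s| <= d -> a <= `|s'| <= d ->
    0 < s * s' -> (K s <= K s' + (L * `|s - s'|)%:E)%E.
Proof.
move=> a0 d1; case: hK => -[_ cneg cpos _ _] _.
have [L1 L10 L1lip] := concave_lipschitz cpos a0 d1.
have d1' : -1 < - d by lra.
have a0' : - a < 0 by lra.
have [L2 L20 L2lip] := concave_lipschitz cneg d1' a0'.
exists (L1 + L2); split => [|s s' /andP[a_s sd] /andP[a_s' s'd] ss']; first exact: addr_ge0.
have s01 : 0 < `|s| < 1 by apply/andP; split; lra.
have s'01 : 0 < `|s'| < 1 by apply/andP; split; lra.
rewrite (singular_kernel_fineK s01) (singular_kernel_fineK s'01) -EFinD lee_fin.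
suff : `|fine (K s) - fine (K s')| <= (L1 + L2) * `|s - s'|.
  by move/ler_normlW; lra.
have := mulr_ge0 L10 (normr_ge0 (s - s')); have := mulr_ge0 L20 (normr_ge0 (s - s')).
rewrite mulrDl; have [s0|s0|s0] := ltgtP s 0.
- rewrite nmulr_rgt0 // in ss'; rewrite !ltr0_norm // in a_s sd a_s' s'd.
  have hs : - d <= s <= - a by apply/andP; split; lra.
  have hs' : - d <= s' <= - a by apply/andP; split; lra.
  by have := L2lip s s' hs hs'; lra.
- rewrite pmulr_rgt0 // in ss'; rewrite !gtr0_norm // in a_s sd a_s' s'd.
  have hs : a <= s <= d by apply/andP; split; lra.
  have hs' : a <= s' <= d by apply/andP; split; lra.
  by have := L1lip s s' hs hs'; lra.
- by rewrite s0 mul0r ltxx in ss'.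
Qed.
End SingularKernel.

Lemma finite_min_gt0 (R : realDomainType) (I : finType) (f : I -> R) :
  (forall i, 0 < f i) -> exists2 m, 0 < m & forall i, m <= f i.
Proof.
move=> f_gt0; exists (\big[Num.min/1]_i f i).
  by apply: (big_ind (fun m => 0 < m)) => // a b a0 b0; rewrite lt_min a0.
by move=> i; rewrite (bigD1 i) //= ge_min lexx.
Qed.

Section MaxNorm.
Variables (R : realType) (n : nat).
Implicit Types v x y : 'I_n -> R.

Lemma le_maxnorm v i : `|v i| <= maxnorm v.
Proof. by rewrite /maxnorm (bigD1 i) //= le_max lexx. Qed.

Lemma maxnorm_ge0 v : 0 <= maxnorm v.
Proof. by apply: (big_ind (fun m => 0 <= m)) => // a b a0 b0; rewrite le_max a0. Qed.

Lemma maxnorm_le v B : 0 <= B -> (forall i, `|v i| <= B) -> maxnorm v <= B.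
Proof. by move=> B0 vB; apply: (big_ind (fun m => m <= B)) => // a b aB bB; rewrite ge_max aB. Qed.

Lemma maxnormC x y : maxnorm (fun i => x i - y i) = maxnorm (fun i => y i - x i).
Proof. by apply: eq_bigr => i _; rewrite distrC. Qed.
End MaxNorm.

Lemma interior_margin (R : realType) (n : nat) (y : 'I_n -> R) :
  (forall i, 0 < y i < 1) -> exists2 c, 0 < c & forall i, c <= y i <= 1 - c.
Proof.
move=> y01; have [c c_gt0 c_le] : exists2 c, 0 < c & forall i, c <= Num.min (y i) (1 - y i).
  by apply: finite_min_gt0 => i; rewrite lt_min; have := y01 i; move=> /andP[? ?]; apply/andP; lra.
by exists c => // i; have := c_le i; rewrite le_min => /andP[? ?]; apply/andP; lra.
Qed.

Section Separation.
Variable R : realType.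
Implicit Types e u v w : R.

Lemma le_far e u v t : `|u - v| < e -> e <= `|t - v| -> (u <= t) = (v <= t).
Proof.
rewrite ltr_norml ler_normr => /andP[uv1 uv2] tv.
by apply/idP/idP => ?; move: tv => /orP[]; lra.
Qed.

Lemma far_norm_ge e u w : 2 * e <= `|w| -> `|u - w| < e -> e <= `|u|.
Proof.
have := ler_normD u (w - u); rewrite addrC subrK distrC.
by have := normr_ge0 u; lra.
Qed.

Lemma far_mul_gt0 e u v w : 2 * e <= `|w| -> `|u - w| < e -> `|v - w| < e -> 0 < u * v.
Proof.
rewrite !ltr_norml; have [w0|w0|->] := ltgtP w 0.
- by rewrite ltr0_norm // => ? /andP[? ?] /andP[? ?]; rewrite nmulr_rgt0; lra.
- by rewrite gtr0_norm // => ? /andP[? ?] /andP[? ?]; rewrite pmulr_rgt0; lra.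
- by rewrite normr0 => ? /andP[? ?]; lra.
Qed.
End Separation.

Section Yext.
Variables (R : realType) (n : nat).
Implicit Types x y : 'I_n -> R.

Lemma yext_ord x (i : 'I_n) : yext x i.+1 = x i.
Proof. by rewrite /yext valK. Qed.

Lemma yext_last x : yext x n.+1 = 1.
Proof. by rewrite /yext insubF // ltnn. Qed.

Lemma yext_cases x y k :
  yext x k = yext y k \/ exists i, yext x k = x i /\ yext y k = y i.
Proof.
case: k => [|k]; first by left.
by rewrite /yext; case: insubP => [i _ _|_]; [right; exists i|left].
Qed.

Lemma yext_itv01 x k : (forall i, 0 <= x i <= 1) -> 0 <= yext x k <= 1.
Proof.
move=> x01; case: k => [|k]; first by rewrite lexx ler01.
by rewrite /yext; case: insubP => [i _ _|_] //; rewrite ler01 lexx.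
Qed.

Lemma inS_itv01 y : inS y -> forall i, 0 < y i < 1.
Proof.
move=> yS i; pose D := [pred k | (k <= n.+1)%N].
have incr : {in D &, {homo yext y : k l / (k < l)%N >-> k < l}}.
  apply: homo_ltn_in => [? ? ?|a b _ bD c /andP[_ /ltnW cb]|k _]; first exact: lt_trans.
    by rewrite inE (leq_trans cb).
  by rewrite inE ltnS; exact: yS.
rewrite -yext_ord -[0](_ : yext y 0 = 0) // -(yext_last y).
rewrite !incr ?inE //.
all: by rewrite ltnS ?(ltnW (ltn_ord i)) ?ltn_ord.
Qed.

Lemma yext_itv_far x y e j t :
  (forall i, `|x i - y i| < e) -> (forall i, e <= `|t - y i|) ->
  (yext x j <= t <= yext x j.+1) = (yext y j <= t <= yext y j.+1).
Proof.
move=> xy ty; have yext_le k : (yext x k <= t) = (yext y k <= t).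
  by case: (yext_cases x y k) => [->|[i [-> ->]]] //; exact: le_far.
have le_yext k : (t <= yext x k) = (t <= yext y k).
  case: (yext_cases x y k) => [->|[i [-> ->]]] //.
  rewrite -lerN2 -[in RHS]lerN2; apply: (@le_far _ e).
  - by rewrite -opprD normrN xy.
  - by rewrite -opprD normrN ty.
by rewrite yext_le le_yext.
Qed.
End Yext.

Section ErealSup.
Variables (R : realType) (T : Type).
Implicit Types (I : set T) (f : T -> \bar R).

Lemma ereal_sup_neqNy I f :
  ereal_sup (f @` I) != -oo%E -> exists2 t, I t & f t != -oo%E.
Proof.
move=> supNy; apply: contrapT => noNy; move: supNy; apply/negP/negPn/eqP.
apply/ereal_sup_ninfty => _ [t It <-]; apply/eqP/negPn/negP => ftNy.
by apply: noNy; exists t.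
Qed.

Lemma ereal_sup_fin_num I f (UB : R) t0 : I t0 -> f t0 != -oo%E ->
  (forall t, I t -> (f t <= UB%:E)%E) -> ereal_sup (f @` I) \is a fin_num.
Proof.
move=> It0 ft0 fUB; apply: fin_real; apply/andP; split.
  by apply: lt_le_trans (ereal_sup_ubound (imageP f It0)); rewrite ltNye.
by apply: le_lt_trans (ltry UB); apply: ge_ereal_sup => _ [t It <-]; exact: fUB.
Qed.

Lemma ereal_sup_le_shift I I' f f' (A D : R) t0 : 0 <= D -> I' t0 ->
  (A%:E <= f' t0)%E ->
  (forall t, I t -> (f t <= A%:E)%E \/ I' t /\ (f t <= f' t + D%:E)%E) ->
  (ereal_sup (f @` I) <= ereal_sup (f' @` I') + D%:E)%E.
Proof.
move=> D0 I't0 ft0 ff'; apply: ge_ereal_sup => _ [t It <-].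
have sup_ub s : I' s -> (f' s <= ereal_sup (f' @` I'))%E.
  by move=> I's; apply: ereal_sup_ubound; exists s.
case: (ff' t It) => [fA|[I't fD]].
- apply: le_trans fA (le_trans ft0 (le_trans (sup_ub _ I't0) _)).
  by apply: leeDl; rewrite lee_fin.
- by apply: le_trans fD _; apply: leeD2r; exact: sup_ub.
Qed.
End ErealSup.

Lemma fine_dist_le (R : realType) (a b : \bar R) (D : R) :
  a \is a fin_num -> b \is a fin_num ->
  (a <= b + D%:E)%E -> (b <= a + D%:E)%E -> `|fine a - fine b| <= D.
Proof.
move=> /fineK <- /fineK <-; rewrite -!EFinD !lee_fin /= ler_norml.
by move=> ? ?; apply/andP; split; lra.
Qed.

Section FieldSum.
Variables (R : realType) (n : nat) (K : 'I_n -> R -> \bar R) (J : R -> \bar R).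
Hypothesis hK : forall i, singular_kernel (K i).
Variable M : R.
Hypothesis J_ub : forall t, 0 <= t <= 1 -> (J t <= M%:E)%E.
Local Notation F := (Fval J K).

Lemma Fval_ub d : d < 1 -> exists UB, forall x t, 0 <= t <= 1 ->
  (forall i, `|t - x i| <= d) -> (F x t <= UB%:E)%E.
Proof.
move=> d1; have /choice[C KC] := fun i => singular_kernel_ub (hK i) d1.
exists (M + \sum_i C i) => x t t01 xd.
rewrite /Fval EFinD -sumEFin; apply: leeD; first exact: J_ub.
by apply: lee_sum => i _; apply: (KC i).2.
Qed.

Lemma Fval_near_singularity d B : d < 1 -> exists2 r, 0 < r &
  forall x t i, 0 <= t <= 1 -> (forall i, `|t - x i| <= d) -> `|t - x i| < r ->
    (F x t <= B%:E)%E.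
Proof.
move=> d1; have /choice[C KC] := fun i => singular_kernel_ub (hK i) d1.
set S := \sum_i C i.
have /choice[r Kr] := fun i => singular_kernel_near0 (hK i) (B - M - S).
have [r0 r0_gt0 r0_le] := finite_min_gt0 (fun i => (Kr i).1).
exists r0 => // x t i t01 xd xr.
have others : \sum_(i' < n | i' != i) C i' <= S.
  by rewrite /S [leRHS](bigD1 i) //= ler_wpDl //; case: (KC i).
have -> : B = M + ((B - M - S) + S) by ring.
rewrite /Fval (bigD1 i) //= !EFinD; apply: leeD; first exact: J_ub.
apply: leeD; first by apply: (Kr i).2; exact: lt_le_trans xr (r0_le i).
apply: le_trans (_ : ((\sum_(i' < n | i' != i) C i')%:E <= _)%E); last by rewrite lee_fin.
by rewrite -sumEFin; apply: lee_sum => i' _; apply: (KC i').2.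
Qed.

Lemma Fval_lipschitz a d : 0 < a -> d < 1 -> exists2 L, 0 <= L &
  forall x x' t, (forall i, [/\ a <= `|t - x i| <= d, a <= `|t - x' i| <= d
                              & 0 < (t - x i) * (t - x' i)]) ->
    (F x t <= F x' t + (L * maxnorm (fun i => x i - x' i))%:E)%E.
Proof.
move=> a0 d1; have /choice[L KL] := fun i => singular_kernel_lipschitz (hK i) a0 d1.
exists (\sum_i L i) => [|x x' t xx't]; first by apply: sumr_ge0 => i _; case: (KL i).
rewrite /Fval -addeA; apply: leeD2l.
apply: (@le_trans _ _ (\sum_i (K i (t - x' i) + (L i * `|x i - x' i|)%:E))%E).
  apply: lee_sum => i _; have [xt x't xx'] := xx't i.
  have -> : `|x i - x' i| = `|t - x i - (t - x' i)| by rewrite distrC; congr `|_|; ring.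
  exact: (KL i).2.
rewrite big_split /= sumEFin leeD2l // lee_fin mulr_suml.
by apply: ler_sum => i _; apply: ler_wpM2l; [case: (KL i)|exact: le_maxnorm].
Qed.

Section Local.
Variables (y : 'I_n -> R) (c : R).
Hypotheses (c_gt0 : 0 < c) (y_margin : forall i, c <= y i <= 1 - c).

Lemma near_itv01 x i : `|x i - y i| < c / 2 -> 0 <= x i <= 1.
Proof. by have := y_margin i; rewrite ltr_norml => /andP[? ?] /andP[? ?]; apply/andP; lra. Qed.

Lemma near_dist_le x t i : `|x i - y i| < c / 2 -> 0 <= t <= 1 ->
  `|t - x i| <= 1 - c / 2.
Proof.
have := y_margin i; rewrite ltr_norml ler_norml => /andP[? ?] /andP[? ?] /andP[? ?].
by apply/andP; lra.
Qed.

Lemma near_yext_itv01 x j t : (forall i, `|x i - y i| < c / 2) ->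
  yext x j <= t <= yext x j.+1 -> 0 <= t <= 1.
Proof.
move=> xy /andP[? ?]; have := yext_itv01 j (fun i => near_itv01 (xy i)).
by have := yext_itv01 j.+1 (fun i => near_itv01 (xy i)) => /andP[? ?] /andP[? ?]; lra.
Qed.

Section Ball.
(* [V] is the finite value F(y,t0); [Fr] and [FL] are instances of
   [Fval_near_singularity] and [Fval_lipschitz]. *)
Variables (j : 'I_n.+1) (r L V eps t0 : R).
Hypothesis Fr : forall x t i, 0 <= t <= 1 -> (forall i, `|t - x i| <= 1 - c / 2) ->
  `|t - x i| < r -> (F x t <= (V - 1)%:E)%E.
Hypothesis FL : forall x x' t,
  (forall i, [/\ r / 4 <= `|t - x i| <= 1 - c / 2, r / 4 <= `|t - x' i| <= 1 - c / 2
               & 0 < (t - x i) * (t - x' i)]) ->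
  (F x t <= F x' t + (L * maxnorm (fun i => x i - x' i))%:E)%E.
Hypotheses (r_gt0 : 0 < r) (L_ge0 : 0 <= L) (eps_c : eps <= c / 2) (eps_r : eps <= r / 4)
  (eps_L : L * eps <= 1).
Hypotheses (It0 : yext y j <= t0 <= yext y j.+1) (t0_far : forall i, r <= `|t0 - y i|)
  (FV : F y t0 = V%:E).

Lemma Fval_ball_far x x' t :
  maxnorm (fun i => x i - y i) < eps -> maxnorm (fun i => x' i - y i) < eps ->
  0 <= t <= 1 -> (forall i, r / 2 <= `|t - y i|) ->
  (F x t <= F x' t + (L * maxnorm (fun i => x i - x' i))%:E)%E.
Proof.
move=> xy x'y t01 t_far; apply: FL => i.
have xyi : `|x i - y i| < eps := le_lt_trans (le_maxnorm _ i) xy.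
have x'yi : `|x' i - y i| < eps := le_lt_trans (le_maxnorm _ i) x'y.
have far2 : 2 * (r / 4) <= `|t - y i| by rewrite (_ : 2 * (r / 4) = r / 2) ?t_far //; field.
have shift u : `|u - y i| < eps -> `|t - u - (t - y i)| < r / 4.
  move=> uy; rewrite (_ : t - u - (t - y i) = - (u - y i)); last by ring.
  by rewrite normrN (lt_le_trans uy).
split.
- by rewrite (far_norm_ge far2 (shift _ xyi)) near_dist_le // (lt_le_trans xyi).
- by rewrite (far_norm_ge far2 (shift _ x'yi)) near_dist_le // (lt_le_trans x'yi).
- exact: far_mul_gt0 far2 (shift _ xyi) (shift _ x'yi).
Qed.

Lemma Fval_ball_near x t i : maxnorm (fun i => x i - y i) < eps -> 0 <= t <= 1 ->
  `|t - y i| < r / 2 -> (F x t <= (V - 1)%:E)%E.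
Proof.
move=> xy t01 ty; have xyi k : `|x k - y k| < eps := le_lt_trans (le_maxnorm _ k) xy.
apply: (Fr (i := i) t01) => [k|]; first exact: near_dist_le (lt_le_trans (xyi k) eps_c) t01.
apply: le_lt_trans (_ : _ <= `|t - y i| + `|x i - y i|) _.
  by rewrite (distrC (x i)); have := ler_normD (t - y i) (y i - x i); rewrite addrA subrK.
by apply: lt_le_trans (ltrD ty (lt_le_trans (xyi i) eps_r)) _; have := r_gt0; lra.
Qed.

Lemma Fval_ball_t0 x : maxnorm (fun i => x i - y i) < eps -> ((V - 1)%:E <= F x t0)%E.
Proof.
move=> xy; have yy : maxnorm (fun i => y i - y i) < eps.
  apply: le_lt_trans xy; apply: maxnorm_le (maxnorm_ge0 _) _ => i.
  by rewrite subrr normr0 maxnorm_ge0.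
have t0_01 : 0 <= t0 <= 1.
  by apply: near_yext_itv01 It0 => i; rewrite subrr normr0 divr_gt0.
have r2r : r / 2 <= r by have := r_gt0; lra.
have := Fval_ball_far yy xy t0_01 (fun i => le_trans r2r (t0_far i)).
rewrite FV maxnormC.
have := ler_wpM2l L_ge0 (ltW xy); case: (F x t0) => [z| |] //=.
- by rewrite -EFinD !lee_fin; have := eps_L; lra.
- by move=> _ _; rewrite leey.
Qed.

Lemma mval_ball_le x x' :
  maxnorm (fun i => x i - y i) < eps -> maxnorm (fun i => x' i - y i) < eps ->
  (mval J K j x <= mval J K j x' + (L * maxnorm (fun i => x i - x' i))%:E)%E.
Proof.
move=> xy x'y; have near z k : maxnorm (fun i => z i - y i) < eps -> `|z k - y k| < r / 2.
  move=> zy; apply: lt_le_trans (le_lt_trans (le_maxnorm _ k) zy) _.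
  by have := eps_r; have := r_gt0; lra.
have sameI z t : maxnorm (fun i => z i - y i) < eps -> (forall i, r / 2 <= `|t - y i|) ->
    (yext z j <= t <= yext z j.+1) = (yext y j <= t <= yext y j.+1).
  by move=> zy; apply: yext_itv_far => k; exact: near.
apply: (ereal_sup_le_shift (A := V - 1) (t0 := t0)).
- exact: mulr_ge0 L_ge0 (maxnorm_ge0 _).
- rewrite /= in_itv /= sameI // => i; apply: le_trans (t0_far i); have := r_gt0; lra.
- exact: Fval_ball_t0.
move=> t; rewrite /= in_itv /= => It.
have t01 : 0 <= t <= 1.
  by apply: near_yext_itv01 It => i; apply: lt_le_trans (le_lt_trans (le_maxnorm _ i) xy) _.
have [far|/existsNP[i /negP]] := pselect (forall i, r / 2 <= `|t - y i|).
  by right; rewrite in_itv /= sameI // -(sameI x) //; split => //; exact: Fval_ball_far.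
by rewrite -ltNge => near_i; left; exact: Fval_ball_near near_i.
Qed.

Lemma mval_ball_fin_num x :
  maxnorm (fun i => x i - y i) < eps -> mval J K j x \is a fin_num.
Proof.
move=> xy; have xyi i : `|x i - y i| < c / 2.
  exact: lt_le_trans (le_lt_trans (le_maxnorm _ i) xy) eps_c.
have d1 : 1 - c / 2 < 1 by have := c_gt0; lra.
have [UB FUB] := Fval_ub d1.
apply: (ereal_sup_fin_num (UB := UB) (t0 := t0)).
- rewrite /= in_itv /= (yext_itv_far (y := y) (e := r / 2)) // => i.
    by apply: lt_le_trans (le_lt_trans (le_maxnorm _ i) xy) _; have := eps_r; have := r_gt0; lra.
  by apply: le_trans (t0_far i); have := r_gt0; lra.
- by move: (Fval_ball_t0 xy); case: (F x t0).
- move=> t; rewrite /= in_itv /= => It; have t01 := near_yext_itv01 xyi It.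
  by apply: (FUB _ _ t01) => i; exact: near_dist_le (xyi i) t01.
Qed.
End Ball.

Lemma mval_local_lipschitz j : mval J K j y != -oo%E ->
  exists eps : R, 0 < eps /\ exists L : R, forall x x' : 'I_n -> R,
    maxnorm (fun i => x i - y i) < eps -> maxnorm (fun i => x' i - y i) < eps ->
    mval J K j x \is a fin_num /\
    `|fine (mval J K j x) - fine (mval J K j x')| <= L * maxnorm (fun i => x i - x' i).
Proof.
move=> mNy; have d1 : 1 - c / 2 < 1 by have := c_gt0; lra.
have [UB FUB] := Fval_ub d1.
have [t0 It0 Ft0] := ereal_sup_neqNy mNy.
have {}It0 : yext y j <= t0 <= yext y j.+1 by move: It0; rewrite /= in_itv.
have yy i : `|y i - y i| < c / 2 by rewrite subrr normr0 divr_gt0.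
have t0_01 := near_yext_itv01 yy It0.
have FV : F y t0 = (fine (F y t0))%:E.
  rewrite fineK //; apply: fin_real; rewrite ltNye Ft0 /=.
  exact: le_lt_trans (FUB _ _ t0_01 (fun i => near_dist_le (yy i) t0_01)) (ltry _).
set V := fine (F y t0) in FV.
have [r r_gt0 Fr] := Fval_near_singularity (V - 1) d1.
have t0_far i : r <= `|t0 - y i|.
  rewrite leNgt; apply/negP => t0_near.
  have := Fr _ _ i t0_01 (fun i => near_dist_le (yy i) t0_01) t0_near.
  by rewrite FV lee_fin; lra.
have r4_gt0 : 0 < r / 4 by rewrite divr_gt0.
have [L L_ge0 FL] := Fval_lipschitz r4_gt0 d1.
pose eps := Num.min (c / 2) (Num.min (r / 4) (1 / (L + 1))).
have eps_gt0 : 0 < eps by rewrite !lt_min !divr_gt0 ?ltr01 //; lra.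
have eps_c : eps <= c / 2 by rewrite ge_min lexx.
have eps_r : eps <= r / 4 by rewrite !ge_min lexx orbT.
have eps_L : L * eps <= 1.
  have : eps <= 1 / (L + 1) by rewrite !ge_min lexx !orbT.
  by rewrite ler_pdivlMr ?mulrDr ?mulr1; lra.
exists eps; split => //; exists L => x x' xy x'y.
have ball_le := mval_ball_le Fr FL r_gt0 L_ge0 eps_c eps_r eps_L It0 t0_far FV.
have ball_fin := mval_ball_fin_num FL r_gt0 L_ge0 eps_c eps_r eps_L It0 t0_far FV.
split; first exact: ball_fin.
apply: fine_dist_le; [exact: ball_fin|exact: ball_fin|exact: ball_le|].
by rewrite maxnormC; exact: ball_le.
Qed.
End Local.

Lemma mvec_local_lipschitz y : inY J K y ->
  exists eps : R, 0 < eps /\ exists L : R, forall x x' : 'I_n -> R,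
    inY J K x -> maxnorm (fun i => x i - y i) < eps ->
    inY J K x' -> maxnorm (fun i => x' i - y i) < eps ->
    maxnorm (fun j : 'I_n.+1 => fine (mval J K j x) - fine (mval J K j x'))
      <= L * maxnorm (fun i => x i - x' i).
Proof.
move=> [/inS_itv01/interior_margin[c c_gt0 yc] mNy].
have /choice[e /all_and2[e_gt0 /choice[L xL]]] :=
  fun j => mval_local_lipschitz c_gt0 yc (mNy j).
have [eps eps_gt0 eps_le] := finite_min_gt0 e_gt0.
exists eps; split => //; exists (\sum_j `|L j|) => x x' _ xy _ x'y.
apply: maxnorm_le => [|j]; first by rewrite mulr_ge0 ?sumr_ge0 ?maxnorm_ge0.
have [_ Lj] := xL j x x' (lt_le_trans xy (eps_le j)) (lt_le_trans x'y (eps_le j)).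
apply: le_trans Lj _; rewrite ler_wpM2r ?maxnorm_ge0 //; apply: le_trans (ler_norm _) _.
by rewrite (bigD1 j) //= lerDl sumr_ge0.
Qed.
End FieldSum.

Theorem proposition5p1 (R : realType) (n : nat) (K : 'I_n -> R -> \bar R)
    (J : R -> \bar R) :
  (forall i, singular_kernel (K i)) -> field_function n J ->
  (forall (y : 'I_n -> R) (j : 'I_n.+1),
      inSbar y -> (forall i, 0 < y i < 1) -> mval J K j y != -oo%E ->
      exists eps : R, 0 < eps /\ exists L : R,
        forall x x' : 'I_n -> R,
          inSbar x -> maxnorm (fun i => x i - y i) < eps ->
          inSbar x' -> maxnorm (fun i => x' i - y i) < eps ->
          mval J K j x \is a fin_num /\
          `|fine (mval J K j x) - fine (mval J K j x')|
            <= L * maxnorm (fun i => x i - x' i)) /\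
  (forall y : 'I_n -> R, inY J K y ->
      exists eps : R, 0 < eps /\ exists L : R,
        forall x x' : 'I_n -> R,
          inY J K x -> maxnorm (fun i => x i - y i) < eps ->
          inY J K x' -> maxnorm (fun i => x' i - y i) < eps ->
          maxnorm (fun j : 'I_n.+1 => fine (mval J K j x) - fine (mval J K j x'))
            <= L * maxnorm (fun i => x i - x' i)).
Proof.
move=> hK [[M J_ub] _]; split=> [y j _ y01 mNy|y yY].
- have [c c_gt0 yc] := interior_margin y01.
  have [eps [eps_gt0 [L xL]]] := mval_local_lipschitz hK J_ub c_gt0 yc mNy.
  by exists eps; split => //; exists L => x x' _ xy _ x'y; exact: xL.
- exact (mvec_local_lipschitz hK J_ub yY).
Qed.
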